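(* Let $X_0,X_1,\dots,X_N$ be vectors in $\mathbf{R}^m$ such that (1) $X_0=0$; (2) for each $1\le t\le N$, $X_t$ and $X_{t-1}$ differ in exactly one coordinate, by $+1$ or $-1$; (3) for every $1\le i\le m$ there exists $t$ such that $X_t$ and $X_{t-1}$ differ in the $i$-th coordinate. Then there is a subset $X_{t_1},\dots,X_{t_m}$ of these vectors that forms a basis of $\mathbf{R}^m$. *)

From HB Require Import structures.
From mathcomp Require Import all_boot all_order all_algebra.
From mathcomp Require Import reals.
Set Implicit Arguments.
Unset Strict Implicit.
Unset Printing Implicit Defensive.
Import Order.TTheory GRing.Theory Num.Theory.

From HB Require Import structures.
From mathcomp Require Import all_boot all_order all_algebra.
From mathcomp Require Import reals.
Import Order.TTheory GRing.Theory Num.Theory.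
Local Open Scope ring_scope.

(* Each coordinate direction is used by some step, and a step from X_(t-1) to
   X_t changes one coordinate by 1 or -1, so +-e_i = X_t - X_(t-1) lies in the
   span of the walk.  Hence X_0, ..., X_N span R^m, and any spanning family
   contains a basis. *)

Section SpanningFamily.

Variables (K : fieldType) (vT : vectType K).

Lemma exists_free_subfamily {I : eqType} (Y : I -> vT) (s : seq I) :
  exists T : seq I, free (map Y T) /\ (<<map Y T>> = <<map Y s>>)%VS.
Proof.
elim: s => [|a s [T [freeT spanT]]].
  by exists [::]; rewrite /free /= span_nil dimv0.
have [YaT | YaNT] := boolP (Y a \in <<map Y T>>%VS).
  exists T; split => //; rewrite /= span_cons -spanT.
  by apply/esym/addv_idPr; rewrite -memvE.
by exists (a :: T); rewrite /= free_cons YaNT freeT !span_cons spanT.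
Qed.

Lemma spanning_family_basis (I : finType) (Y : I -> vT) (n : nat) :
  \dim {:vT} = n -> <<map Y (enum I)>>%VS = fullv ->
  exists f : 'I_n -> I,
    injective f /\ basis_of fullv [seq Y (f k) | k <- enum 'I_n].
Proof.
move=> dim_vT spanY.
have [T [freeT spanT]] := exists_free_subfamily Y (enum I).
have sizeT : size T == n.
  by move/eqP: freeT; rewrite spanT spanY dim_vT size_map => ->.
have uniqT : uniq T by apply: (map_uniq (f := Y)); apply: free_uniq.
pose tT : n.-tuple I := Tuple sizeT.
exists (tnth tT); split; first exact/tuple_uniqP.
by rewrite map_comp map_tnth_enum /basis_of freeT spanT spanY eqxx.
Qed.

End SpanningFamily.

Section UnitSteps.

Context {R : pzRingType} {m : nat}.
Implicit Types x y : 'rV[R]_m.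

Definition unit_step x y :=
  exists i : 'I_m,
    (x ord0 i - y ord0 i = 1 \/ x ord0 i - y ord0 i = -1) /\
    (forall j : 'I_m, j != i -> x ord0 j = y ord0 j).

Lemma unit_step_sub {x y i} :
  unit_step x y -> x ord0 i != y ord0 i -> x - y = 'e_i \/ x - y = - 'e_i.
Proof.
move=> [j [step_j same_off_j]] xy_i.
have ji : j = i.
  by apply: contraNeq xy_i => ji; apply/eqP/same_off_j; rewrite eq_sym.
subst j; have -> : x - y = (x ord0 i - y ord0 i) *: 'e_i.
  apply/rowP => k; rewrite !mxE.
  have [-> | ki] := eqVneq k i; first by rewrite eqxx mulr1.
  by rewrite andbF mulr0 same_off_j // subrr.
by case: step_j => ->; [left; rewrite scale1r | right; rewrite scaleN1r].
Qed.

End UnitSteps.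

Section RowSpaces.

Context {F : fieldType} {m : nat}.
Implicit Types (x y : 'rV[F]_m) (U : {vspace 'rV[F]_m}).

Lemma unit_step_delta_mem {U x y i} :
  unit_step x y -> x ord0 i != y ord0 i -> x \in U -> y \in U -> 'e_i \in U.
Proof.
move=> xy xy_i xU yU; have := memvB xU yU.
by case: (unit_step_sub xy xy_i) => ->; rewrite ?memvN.
Qed.

Lemma deltas_fullv U : (forall i : 'I_m, 'e_i \in U) -> U = fullv.
Proof.
move=> deltaU; apply/eqP; rewrite eqEsubv subvf; apply/subvP => v _.
by rewrite (row_sum_delta v); apply: memv_suml => i _; apply/memvZ/deltaU.
Qed.

End RowSpaces.

Theorem lemma4p1 (R : realType) (m N : nat) (X : nat -> 'rV[R]_m) :
  X 0%N = 0 ->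
  (forall t : nat, (1 <= t <= N)%N ->
     exists i : 'I_m,
       (X t ord0 i - X t.-1 ord0 i = 1 \/ X t ord0 i - X t.-1 ord0 i = -1) /\
       (forall j : 'I_m, j != i -> X t ord0 j = X t.-1 ord0 j)) ->
  (forall i : 'I_m, exists t : nat, (1 <= t <= N)%N /\ X t ord0 i != X t.-1 ord0 i) ->
  exists f : 'I_m -> 'I_N.+1,
    injective f /\
    basis_of fullv [seq X (nat_of_ord (f k)) | k <- enum 'I_m].
Proof.
move=> _ steps covering.
pose Y (t : 'I_N.+1) := X t.
have memY t : (t <= N)%N -> X t \in <<map Y (enum 'I_N.+1)>>%VS.
  move=> tN; apply/memv_span/(map_f Y (x := Ordinal (tN : t < N.+1)%N)).
  by rewrite mem_enum.
have spanY : <<map Y (enum 'I_N.+1)>>%VS = fullv.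
  apply: deltas_fullv => i; have [t [/andP[t_gt0 tN] step_i]] := covering i.
  apply: unit_step_delta_mem (steps t _) step_i _ _; rewrite ?t_gt0 ?memY //.
  exact: leq_trans (leq_pred t) tN.
have dim_rV : \dim {:'rV[R]_m} = m by rewrite dimvf dim_matrix mul1r.
exact: spanning_family_basis dim_rV spanY.
Qed.
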